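(* For integers $n,m$ and $y=(y_1,y_2,y_3)\in Q$, \[\sum_{r=y_1}^n\sum_{s=y_1+y_2}^m\mathcal{K}_{n,m;r,s}(z,w;q)\,\Phi_{r,s;y}(z,w;q)=z^{y_1}w^{y_1+y_2}q^{\frac12(y_1^2+y_2^2+y_3^2)}\Phi_{n,m;y}(z,w;q).\]
   Context: $Q=\{y\in\mathbb{Z}^3:y_1+y_2+y_3=0\}$. For $n\in\mathbb{Z}$, $(a;q)_n=(a;q)_\infty/(aq^n;q)_\infty$ (so $1/(q;q)_n=0$ for $n<0$). $\mathcal{K}_{n,m;r,s}(z,w;q):=\frac{z^rw^sq^{r^2-rs+s^2}}{(q;q)_{n-r}(q;q)_{m-s}}$, and \[\Phi_{n,m;y}(z,w;q):=\frac{(zwq;q)_{n+m}}{(q;q)_{n-y_1}(zq;q)_{n-y_2}(zwq;q)_{n-y_3}(q;q)_{m+y_3}(wq;q)_{m+y_2}(zwq;q)_{m+y_1}}.\] A sum $\sum_{r=A}^B$ with $B<A$ is empty. *)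

From mathcomp Require Import all_boot all_order all_algebra.
Set Implicit Arguments. Unset Strict Implicit. Unset Printing Implicit Defensive.
Import Order.TTheory GRing.Theory Num.Theory.
Local Open Scope ring_scope.

(* q-Pochhammer symbol (a;q)_n for integer n, with
   (a;q)_n = (a;q)_oo/(a q^n;q)_oo, i.e.
   n >= 0 : prod_{i=0}^{n-1} (1 - a q^i)
   n = -k < 0 : 1 / prod_{j=1}^{k} (1 - a q^{-j}).
   (For a = q and n < 0 the product vanishes, and MathComp's 0^-1 = 0
   gives 1/(q;q)_n = 0, matching the paper's convention.) *)
Definition qpoch (K : fieldType) (a q : K) (n : int) : K :=
  match n with
  | Posz k => \prod_(i < k) (1 - a * q ^+ i)
  | Negz k => (\prod_(j < k.+1) (1 - a * q ^- j.+1))^-1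
  end.

Definition isum (K : fieldType) (A B : int) (F : int -> K) : K :=
  if A <= B then \sum_(i < (absz (B - A)).+1) F (A + (i : nat)%:Z) else 0.

Definition Kker (K : fieldType) (n m r s : int) (z w q : K) : K :=
  z ^ r * w ^ s * q ^ (r * r - r * s + s * s)
  / (qpoch q q (n - r) * qpoch q q (m - s)).

Definition Phi (K : fieldType) (n m y1 y2 y3 : int) (z w q : K) : K :=
  qpoch (z * w * q) q (n + m)
  / (qpoch q q (n - y1) * qpoch (z * q) q (n - y2) * qpoch (z * w * q) q (n - y3)
     * qpoch q q (m + y3) * qpoch (w * q) q (m + y2) * qpoch (z * w * q) q (m + y1)).

(* Write y2 = -y1 - y3.  Because 1/(q;q)_k = 0 for k < 0, both sides vanish unless
   N = n - y1 and M = m + y3 are natural numbers.  Substituting r = y1 + i and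
   s = -y3 + j, every summand becomes a common factor times
     double_term(i,j) = (u/q)^i (v/q)^j q^{i^2-ij+j^2} / ((q)_{N-i} (q)_{M-j} (u)_i (v)_j)
                        * (c)_{i+j} / ((q)_i (q)_j (c)_i (c)_j),
   where u = zq^{2y1+y3+1}, v = wq^{1-y1-2y3} and c = uv/q, and the theorem reduces to
     sum_{i<=N, j<=M} double_term(i,j) = (c)_{N+M} / ((q)_N (q)_M (u)_N (v)_M (c)_N (c)_M).
   This identity is proved first, in an arbitrary field, through the terminating
   sums hsum N h c x = sum_k x^k q^{k(k-1)} h(k) / ((q)_k (q)_{N-k} (c)_k): two
   contiguous relations in N (from the q-Pascal rules) give three closed
   evaluations by induction; one of them expands the coupling factor (c)_{i+j} as
   a sum over k, after which the sums over i and j decouple and are evaluated by a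
   q-Vandermonde-type identity. *)

From mathcomp Require Import all_boot all_order all_algebra.
From mathcomp Require Import ring zify.
Import Order.TTheory GRing.Theory Num.Theory.
Set Implicit Arguments. Unset Strict Implicit. Unset Printing Implicit Defensive.
Local Open Scope ring_scope.

Ltac nonzero_side := repeat (match goal with |- context [?x != 0] =>
   let H := fresh in (have H : x != 0 by assumption); rewrite H; clear H end);
   rewrite /= ?oner_neq0 //.

Section FiniteQHypergeometric.
Variables (K : fieldType) (q : K).

Definition poch (a : K) (n : nat) : K := \prod_(i < n) (1 - a * q ^+ i).

Definition regular (a : K) : Prop := forall i : nat, 1 - a * q ^+ i != 0.

Lemma poch0 a : poch a 0 = 1.
Proof. by rewrite /poch big_ord0. Qed.

Lemma pochSr a n : poch a n.+1 = poch a n * (1 - a * q ^+ n).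
Proof. by rewrite /poch big_ord_recr. Qed.

Lemma pochSl a n : poch a n.+1 = (1 - a) * poch (a * q) n.
Proof.
rewrite /poch big_ord_recl /= expr0 mulr1; congr (_ * _).
by apply: eq_bigr => i _; rewrite exprS mulrA.
Qed.

Lemma pochD a m n : poch a (m + n) = poch a m * poch (a * q ^+ m) n.
Proof.
elim: n => [|n IH]; first by rewrite addn0 poch0 mulr1.
by rewrite addnS !pochSr IH -!mulrA exprD mulrA.
Qed.

Lemma poch_neq0 a n : regular a -> poch a n != 0.
Proof. by move=> ha; apply/prodf_neq0 => i _. Qed.

Lemma regular_mulq a : regular a -> regular (a * q).
Proof. by move=> ha i; rewrite -mulrA -exprS. Qed.

Lemma regular_mulqX a k : regular a -> regular (a * q ^+ k).
Proof. by move=> ha i; rewrite -mulrA -exprD. Qed.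

Lemma regular_1sub a : regular a -> 1 - a != 0.
Proof. by move=> ha; have := ha 0%N; rewrite expr0 mulr1. Qed.

Lemma poch_mulq a n : 1 - a != 0 -> poch (a * q) n = poch a n * (1 - a * q ^+ n) / (1 - a).
Proof. by move=> h; rewrite -pochSr pochSl [RHS]mulrC mulKf. Qed.

(* 1/(q;q)_{N-k}, extended by 0 for k > N (the paper's convention 1/(q;q)_n = 0
   for n < 0); it serves as a truncating coefficient throughout. *)
Definition rqfac (N k : nat) : K := if (k <= N)%N then (poch q (N - k))^-1 else 0.

Lemma rqfac_gt N k : (N < k)%N -> rqfac N k = 0.
Proof. by rewrite /rqfac ltnNge => /negbTE ->. Qed.

Lemma rqfacSS N k : rqfac N.+1 k.+1 = rqfac N k.
Proof. by rewrite /rqfac ltnS subSS. Qed.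

Lemma rqfac0 N : rqfac N 0 = (poch q N)^-1.
Proof. by rewrite /rqfac subn0. Qed.

Lemma rqfacDD k N l : rqfac (k + N) (k + l) = rqfac N l.
Proof. by rewrite /rqfac leq_add2l subnDl. Qed.

Lemma rqfacDl k l : rqfac (k + l) k = (poch q l)^-1.
Proof. by rewrite /rqfac leq_addr addKn. Qed.

Definition hterm (N : nat) (h : nat -> K) (c x : K) (k : nat) : K :=
  x ^+ k * q ^+ (k * k.-1) * (rqfac N k / poch q k) * h k / poch c k.

Definition hsum (N : nat) (h : nat -> K) (c x : K) : K := \sum_(k < N.+1) hterm N h c x k.

Lemma hterm0 N h c x : hterm N h c x 0 = rqfac N 0 * h 0%N.
Proof. by rewrite /hterm /= mul0n !expr0 !mul1r !poch0 !divr1. Qed.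

(* The term k = N+1 vanishes, so a sum of length N+2 starting at k = 0 is hsum N. *)
Lemma hsum_tail N h c x : hterm N h c x 0 + \sum_(i < N.+1) hterm N h c x i.+1 = hsum N h c x.
Proof.
rewrite -(big_ord_recl N.+1 (hterm N h c x)) big_ord_recr /=.
by rewrite /hterm (rqfac_gt (ltnSn N)) mul0r mulr0 !mul0r addr0.
Qed.

(* Terms beyond the truncation point vanish, so the range may be widened. *)
Lemma hsum_widen i N h c x : (i <= N)%N -> hsum i h c x = \sum_(k < N.+1) hterm i h c x k.
Proof.
move=> hi; rewrite /hsum (big_ord_widen N.+1 (hterm i h c x)) ?ltnS // big_mkcond.
apply: eq_bigr => k _; case: ifP => // /negbT; rewrite -leqNgt => hk.
by rewrite /hterm (rqfac_gt hk) mul0r mulr0 !mul0r.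
Qed.

Lemma hsum_zero N c x : hsum N (fun _ => 0) c x = 0.
Proof. by rewrite /hsum big1 // => i _; rewrite /hterm mulr0 mul0r. Qed.

Hypothesis hq : regular q.

Lemma qpow_neq1 n : 1 - q ^+ n.+1 != 0.
Proof. by rewrite exprS; exact: hq. Qed.

Lemma rqfacS0 N : rqfac N.+1 0 = rqfac N 0 / (1 - q ^+ N.+1).
Proof. by rewrite !rqfac0 pochSr -exprS invfM. Qed.

(* The two q-Pascal rules, written for 1/((q)_k (q)_{N-k}) = [N,k]_q/(q)_N. *)
Lemma qpascal1 N m :
  rqfac N.+1 m.+1 / poch q m.+1
  = (rqfac N m.+1 / poch q m.+1 + q ^+ (N - m) * (rqfac N m / poch q m)) / (1 - q ^+ N.+1).
Proof.
have hqm := hq m; have hPm := poch_neq0 m hq; rewrite rqfacSS.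
case: (ltngtP m N) => hmN.
- have [t ->] : exists t, N = (m + t.+1)%N by exists (N - m.+1)%N; lia.
  rewrite rqfacDl -(addn1 m) -addnS rqfacDD rqfacSS rqfac0 addn1.
  have -> : (m + t.+1 - m = t.+1)%N by lia.
  have -> : (m + t.+2 = t.+1 + m.+1)%N by lia.
  have hN := qpow_neq1 (t + m.+1); have hPt := poch_neq0 t hq; have hqt := hq t.
  rewrite -addSn exprD !exprS in hN *; rewrite !pochSr.
  field; nonzero_side.
- by rewrite !rqfac_gt ?mul0r ?mulr0 ?addr0 ?mul0r //; lia.
- subst m; rewrite (rqfac_gt (ltnSn N)) subnn expr0 mul1r mul0r add0r /rqfac leqnn subnn.
  have hN := qpow_neq1 N.
  rewrite poch0 invr1 pochSr -exprS; field; nonzero_side.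
Qed.

Lemma qpascal2 N m :
  rqfac N.+1 m.+1 / poch q m.+1
  = (q ^+ m.+1 * (rqfac N m.+1 / poch q m.+1) + rqfac N m / poch q m) / (1 - q ^+ N.+1).
Proof.
have hqm := hq m; have hPm := poch_neq0 m hq; rewrite rqfacSS.
case: (ltngtP m N) => hmN.
- have [t ->] : exists t, N = (m + t.+1)%N by exists (N - m.+1)%N; lia.
  rewrite rqfacDl -(addn1 m) -addnS rqfacDD rqfacSS rqfac0 addn1.
  have -> : (m + t.+2 = t.+1 + m.+1)%N by lia.
  have hN := qpow_neq1 (t + m.+1); have hPt := poch_neq0 t hq; have hqt := hq t.
  rewrite -addSn exprD !exprS in hN *; rewrite !pochSr.
  field; nonzero_side.
- by rewrite !rqfac_gt ?mul0r ?mulr0 ?addr0 ?mul0r //; lia.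
- subst m; rewrite (rqfac_gt (ltnSn N)) mul0r mulr0 add0r /rqfac leqnn subnn.
  have hN := qpow_neq1 N.
  rewrite poch0 invr1 pochSr -exprS; field; nonzero_side.
Qed.

Lemma qpow_tri i : q ^+ (i.+1 * i.+1.-1) = q ^+ (i * i.-1) * q ^+ i * q ^+ i.
Proof. by rewrite -!exprD; congr (_ ^+ _); case: i => //= n; lia. Qed.

(* Contiguous relations lowering N: one for each q-Pascal rule.  The coefficient
   sequence is shifted, h' k = h (k+1), and the parameters c, x are multiplied by q. *)
Section Contiguous.
Variables (N : nat) (h h' : nat -> K) (c x : K).
Hypotheses (hc : regular c) (hh : forall k, h' k = h k.+1).

Lemma hterm_rec1 i :
  hterm N.+1 h c x i.+1
  = (hterm N h c x i.+1 + x * q ^+ N / (1 - c) * hterm N h' (c * q) (x * q) i) / (1 - q ^+ N.+1).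
Proof.
rewrite /hterm hh qpascal1.
have hc0 := regular_1sub hc; have hPc := poch_neq0 i (regular_mulq hc).
have hPq := poch_neq0 i hq; have hqi := hq i; have hN := qpow_neq1 N.
case: (leqP i N) => hiN; last first.
  have hPq1 := poch_neq0 i.+1 hq.
  rewrite (rqfac_gt hiN) !mul0r !mulr0 !mul0r !addr0 (pochSl c).
  field; nonzero_side.
have eN : q ^+ N = q ^+ (N - i) * q ^+ i by rewrite -exprD subnK.
rewrite (pochSl c) pochSr qpow_tri !exprS eN exprMn.
rewrite exprS eN in hN; field; nonzero_side.
Qed.

Lemma hterm_rec2 i :
  hterm N.+1 h c x i.+1
  = (hterm N h c (x * q) i.+1 + x / (1 - c) * hterm N h' (c * q) (x * q ^+ 2) i) / (1 - q ^+ N.+1).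
Proof.
rewrite /hterm hh qpascal2.
have hc0 := regular_1sub hc; have hPc := poch_neq0 i (regular_mulq hc).
have hPq := poch_neq0 i hq; have hqi := hq i; have hN := qpow_neq1 N.
rewrite (pochSl c) pochSr qpow_tri !exprS !exprMn expr0 expr1n mulr1.
rewrite exprS in hN; field; nonzero_side.
Qed.

Lemma hsum_rec1 :
  hsum N.+1 h c x
  = (hsum N h c x + x * q ^+ N / (1 - c) * hsum N h' (c * q) (x * q)) / (1 - q ^+ N.+1).
Proof.
rewrite {1}/hsum big_ord_recl (eq_bigr _ (fun (i : 'I_N.+1) _ => hterm_rec1 i)).
rewrite -mulr_suml big_split /=.
rewrite -mulr_sumr -(hsum_tail N h c x) !hterm0 rqfacS0.
by rewrite [X in X + _]mulrAC -mulrDl addrA.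
Qed.

Lemma hsum_rec2 :
  hsum N.+1 h c x
  = (hsum N h c (x * q) + x / (1 - c) * hsum N h' (c * q) (x * q ^+ 2)) / (1 - q ^+ N.+1).
Proof.
rewrite {1}/hsum big_ord_recl (eq_bigr _ (fun (i : 'I_N.+1) _ => hterm_rec2 i)).
rewrite -mulr_suml big_split /=.
rewrite -mulr_sumr -(hsum_tail N h c (x * q)) !hterm0 rqfacS0.
by rewrite [X in X + _]mulrAC -mulrDl addrA.
Qed.

End Contiguous.

Lemma hsum_one L a : regular a -> hsum L (fun _ => 1) a a = (poch q L * poch a L)^-1.
Proof.
elim: L a => [|L IH] a ha.
  by rewrite /hsum big_ord1 hterm0 rqfac0 !poch0 mulr1 mul1r.
rewrite (hsum_rec1 (h := fun _ => 1) (h' := fun _ => 1) L a ha (fun _ => erefl)).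
rewrite IH // IH; last exact: regular_mulq.
have h0 := regular_1sub ha; have h1 := poch_neq0 L hq; have h2 := poch_neq0 L ha.
have h3 := ha L; have hN := qpow_neq1 L.
rewrite poch_mulq // !pochSr -exprS; field; nonzero_side.
Qed.

Lemma hsum_rqfac_diag N M c : regular c ->
  hsum N (rqfac M) c c = poch c (N + M) / (poch q N * poch q M * poch c N * poch c M).
Proof.
elim: N M c => [|N IH] M c hc.
  rewrite /hsum big_ord1 hterm0 !rqfac0 !poch0 add0n.
  have h1 := poch_neq0 M hq; have h2 := poch_neq0 M hc.
  field; nonzero_side.
have hN := qpow_neq1 N; have h0 := regular_1sub hc.
have h1 := poch_neq0 N hq; have h2 := poch_neq0 N hc; have h6 := hc N.
case: M => [|M].
  rewrite (hsum_rec1 (h := rqfac 0) (h' := fun _ => 0) N c hc (fun _ => erefl)).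
  rewrite hsum_zero mulr0 addr0 IH // !addn0 !poch0 !mulr1 !pochSr -exprS.
  field; nonzero_side.
rewrite (hsum_rec1 (h := rqfac M.+1) (h' := rqfac M) N c hc (fun k => rqfacSS M k)).
rewrite IH // IH; last exact: regular_mulq.
rewrite !poch_mulq // addSn addnS !pochSr.
have h3 := poch_neq0 M hq; have h4 := poch_neq0 M hc; have h5 := poch_neq0 (N + M) hc.
have h7 := hc M; have h8 := hq N; have h9 := hq M.
rewrite -!exprS !exprS !exprD; field; nonzero_side.
Qed.

Hypothesis hq0 : q != 0.

(* This expands the coupling factor (c)_{i+j} of the double sum as a single sum. *)
Lemma hsum_rqfac_balanced i j c x : regular c -> x * q ^+ (i + j) = q ->
  hsum i (rqfac j) c x * q ^+ (i * j)
  = poch c (i + j) / (poch q i * poch q j * poch c i * poch c j).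
Proof.
have hqk k : q ^+ k != 0 by rewrite expf_neq0.
elim: i j c x => [|i IH] j c x hc hx.
  rewrite /hsum big_ord1 hterm0 !rqfac0 !poch0 add0n mul0n expr0 mulr1.
  have h1 := poch_neq0 j hq; have h2 := poch_neq0 j hc.
  field; nonzero_side.
have hN := qpow_neq1 i; have h0 := regular_1sub hc.
have h1 := poch_neq0 i hq; have h2 := poch_neq0 i hc; have h6 := hc i; have h8 := hq i.
case: j hx => [|j] hx.
  rewrite (hsum_rec2 (h := rqfac 0) (h' := fun _ => 0) i x hc (fun _ => erefl)).
  rewrite hsum_zero mulr0 addr0 muln0 expr0 mulr1.
  have := IH 0%N c (x * q) hc; rewrite muln0 expr0 mulr1 => ->; last first.
    by rewrite -mulrA -exprS -[RHS]hx; congr (_ * _ ^+ _); lia.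
  rewrite !addn0 !poch0 !mulr1 !pochSr -exprS; field; nonzero_side.
rewrite (hsum_rec2 (h := rqfac j.+1) (h' := rqfac j) i x hc (fun k => rqfacSS j k)).
have hx1 : x * q * q ^+ (i + j.+1) = q.
  by rewrite -mulrA -exprS -[RHS]hx; congr (_ * _ ^+ _); lia.
have hx2 : x * q ^+ 2 * q ^+ (i + j) = q.
  by rewrite -mulrA -exprD -[RHS]hx; congr (_ * _ ^+ _); lia.
rewrite (canRL (mulfK (hqk _)) (IH j.+1 c _ hc hx1)).
rewrite (canRL (mulfK (hqk _)) (IH j (c * q) _ (regular_mulq hc) hx2)).
have -> : x = q / q ^+ (i + j).+2.
  by apply: (canRL (mulfK (hqk _))); rewrite -[RHS]hx; congr (_ * _ ^+ _); lia.
rewrite !poch_mulq // addSn addnS !pochSr !mulSn !mulnS !exprD -!exprS !exprS !exprD.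
have h3 := poch_neq0 j hq; have h4 := poch_neq0 j hc; have h5 := poch_neq0 (i + j) hc.
have h7 := hc j; have h9 := hq j.
have hqi := hqk i; have hqj := hqk j; have hqij := hqk (i * j)%N.
field; nonzero_side.
Qed.

(* Summand of a q-Vandermonde-type identity: summing over i collapses the chain
   of truncations 1/(q)_{N-i} * 1/(q)_{i-k}. *)
Definition vdm_term (N : nat) (u : K) (i k : nat) : K :=
  rqfac N i * rqfac i k * (u / q) ^+ i * q ^+ (i * i) / q ^+ (i * k) / poch u i.

Lemma sum_vdm_term u N k : regular u ->
  \sum_(i < N.+1) vdm_term N u i k = (u / q) ^+ k * rqfac N k / poch u N.
Proof.
move=> hu; have hqk n : q ^+ n != 0 by rewrite expf_neq0.
case: (leqP k N) => hkN; last first.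
  rewrite (rqfac_gt hkN) mulr0 mul0r big1 // => i _.
  by rewrite /vdm_term (@rqfac_gt i k) ?mulr0 ?mul0r //; have := ltn_ord i; lia.
have [L ->] : exists L, N = (k + L)%N by exists (N - k)%N; lia.
rewrite -(big_mkord xpredT (fun i => vdm_term (k + L) u i k)).
rewrite (@big_cat_nat _ _ _ k) //=; last by lia.
rewrite big_nat_cond big1 ?add0r; last first.
  by move=> i /andP [/andP [_ hi] _]; rewrite /vdm_term (@rqfac_gt i k) ?mulr0 ?mul0r.
rewrite (big_addn 0 _ k) (_ : (k + L).+1 - k = L.+1)%N; last by lia.
have hP1 := poch_neq0 k hu; have huk := regular_mulqX k hu.
rewrite big_mkord (eq_bigr (fun l : 'I_L.+1 =>
  (u / q) ^+ k / poch u k * hterm L (fun _ => 1) (u * q ^+ k) (u * q ^+ k) l)); last first.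
  move=> l _; rewrite /vdm_term /hterm !(addnC l k) rqfacDD rqfacDl pochD exprD.
  have -> : q ^+ ((k + l) * (k + l))
            = q ^+ ((k + l) * k) * q ^+ l * (q ^+ k) ^+ l * q ^+ (l * l.-1).
    by rewrite -exprM -!exprD; congr (_ ^+ _); case: (l : nat) => [|n] /=; lia.
  have hP2 := poch_neq0 l huk; have hP3 := poch_neq0 l hq.
  have := hqk ((k + l) * k)%N; have := hqk l; have := hqk (l * l.-1)%N; have := hqk k.
  rewrite !exprMn !exprVn.
  move: (q ^+ ((k + l) * k)) (q ^+ l) (q ^+ (l * l.-1)) => A B E hk hE hB hA.
  field; nonzero_side.
rewrite -mulr_sumr -/(hsum L (fun _ => 1) (u * q ^+ k) (u * q ^+ k)) hsum_one //.
rewrite rqfacDl pochD; have hP2 := poch_neq0 L huk; have hP3 := poch_neq0 L hq.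
field; nonzero_side.
Qed.

Definition weight (c : K) (k : nat) : K := q ^+ k * q ^+ (k * k.-1) / (poch q k * poch c k).

Definition double_term (N M : nat) (u v : K) (i j : nat) : K :=
  rqfac N i * rqfac M j * (u / q) ^+ i * (v / q) ^+ j * q ^+ (i * i) * q ^+ (j * j)
    / q ^+ (i * j) / (poch u i * poch v j)
  * (poch (u * v / q) (i + j)
     / (poch q i * poch q j * poch (u * v / q) i * poch (u * v / q) j)).

(* Expanding (c)_{i+j} with hsum_rqfac_balanced separates i from j. *)
Lemma double_term_expand N M u v i j :
  regular u -> regular v -> regular (u * v / q) -> (i <= N)%N ->
  double_term N M u v i j
  = \sum_(k < N.+1) weight (u * v / q) k * vdm_term N u i k * vdm_term M v j k.
Proof.
move=> hu hv hc hiN; have hqk n : q ^+ n != 0 by rewrite expf_neq0.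
have hx : q / q ^+ (i + j) * q ^+ (i + j) = q by rewrite mulfVK.
rewrite /double_term -(hsum_rqfac_balanced hc hx) (hsum_widen _ _ _ hiN) mulr_suml mulr_sumr.
apply: eq_bigr => k _; rewrite /hterm /weight /vdm_term.
have -> : (q / q ^+ (i + j)) ^+ k = q ^+ k / (q ^+ (i * k) * q ^+ (j * k)).
  by rewrite expr_div_n -exprM mulnDl exprD.
have := hqk (i * j)%N; have := hqk (i * i)%N; have := hqk (j * j)%N.
have := hqk (i * k)%N; have := hqk (j * k)%N; have := hqk k.
have := poch_neq0 i hu; have := poch_neq0 j hv; have := poch_neq0 k hq.
have := poch_neq0 k hc; have := poch_neq0 i hq; have := poch_neq0 j hq.
move: (q ^+ (i * j)) (q ^+ (i * i)) (q ^+ (j * j)) (q ^+ (i * k)) (q ^+ (j * k)) (q ^+ k).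
move=> Qij Qii Qjj Qik Qjk Qk h1 h2 h3 h4 h5 h6 h7 h8 h9 h10 h11 h12.
move: ((u / q) ^+ i) ((v / q) ^+ j) (q ^+ (k * k.-1)) (rqfac N i) (rqfac M j) (rqfac i k) (rqfac j k).
move=> X1 X2 X3 X4 X5 X6 X7; field; nonzero_side.
Qed.

(* The double summation identity: after the expansion, exchange the sums, sum
   over i and j with sum_vdm_term and recognise hsum_rqfac_diag. *)
Lemma sum_double_term N M u v : regular u -> regular v -> regular (u * v / q) ->
  \sum_(i < N.+1) \sum_(j < M.+1) double_term N M u v i j
  = poch (u * v / q) (N + M) / (poch q N * poch q M * poch u N * poch v M
       * poch (u * v / q) N * poch (u * v / q) M).
Proof.
move=> hu hv hc; set c := u * v / q; have hqk n : q ^+ n != 0 by rewrite expf_neq0.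
under eq_bigr => i _ do under eq_bigr => j _ do
  rewrite (double_term_expand _ _ hu hv hc (ltn_ord i : (i <= N)%N)).
under eq_bigr => i _ do rewrite exchange_big.
rewrite exchange_big /= (eq_bigr (fun k : 'I_N.+1 =>
  weight c k * ((u / q) ^+ k * rqfac N k / poch u N) * ((v / q) ^+ k * rqfac M k / poch v M))).
  rewrite (eq_bigr (fun k : 'I_N.+1 => hterm N (rqfac M) c c k / (poch u N * poch v M))).
    rewrite -mulr_suml -/(hsum N (rqfac M) c c) hsum_rqfac_diag //.
    have := poch_neq0 N hu; have := poch_neq0 M hv; have := poch_neq0 N hq; have := poch_neq0 M hq.
    have := poch_neq0 N hc; have := poch_neq0 M hc.
    move: (poch c (N + M)) => X h1 h2 h3 h4 h5 h6; field; nonzero_side.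
  move=> k _; rewrite /hterm /weight /c !expr_div_n exprMn.
  have := hqk k; have := poch_neq0 k hq; have := poch_neq0 k hc.
  have := poch_neq0 N hu; have := poch_neq0 M hv.
  move: (q ^+ k) (u ^+ k) (v ^+ k) (q ^+ (k * k.-1)) (rqfac N k) (rqfac M k).
  move=> Qk Uk Vk E D1 D2 h1 h2 h3 h4 h5; field; nonzero_side.
move=> k _; under eq_bigr => i _ do rewrite -mulr_sumr.
by rewrite -mulr_suml -mulr_sumr !sum_vdm_term.
Qed.

End FiniteQHypergeometric.

Section IntegerPochhammer.
Variables (K : fieldType) (a q : K).

Lemma qpoch_nat (n : nat) : qpoch a q n = poch q a n.
Proof. by []. Qed.

(* For n < 0 the product defining (q;q)_n contains the factor 1 - q q^-1 = 0, so
   (q;q)_n = 0^-1 = 0 and hence 1/(q;q)_n = 0, as in the paper. *)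
Lemma qpoch_qq_neg (n : int) : q != 0 -> n < 0 -> qpoch q q n = 0.
Proof.
move=> hq0; case: n => // n _.
by rewrite /qpoch big_ord_recl /= expr1 divff // subrr mul0r invr0.
Qed.

Hypotheses (hq0 : q != 0) (ha : forall t : int, a * q ^ t != 1).

Let ha_sub (t : int) : 1 - a * q ^ t != 0.
Proof. by rewrite subr_eq0 eq_sym ha. Qed.

Lemma generic_mulq (t : int) : a * q * q ^ t != 1.
Proof. by have := ha (1 + t); rewrite expfzDr // expr1z mulrA. Qed.

Lemma generic_regular (k : int) : regular q (a * q ^ k).
Proof.
by move=> i; rewrite -mulrA -[q ^+ i]/(q ^ i%:Z) -expfzDr //; exact: ha_sub.
Qed.

Lemma qpoch_neq0 (k : int) : qpoch a q k != 0.
Proof.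
case: k => n /=; first by apply/prodf_neq0 => i _; exact: ha_sub i.
by rewrite invr_eq0; apply/prodf_neq0 => i _; exact: ha_sub (Negz i).
Qed.

Lemma qpoch_step (k : int) : qpoch a q (k + 1) = qpoch a q k * (1 - a * q ^ k).
Proof.
case: k => [n|[|n]].
- by rewrite (_ : Posz n + 1 = Posz n.+1) ?qpoch_nat ?pochSr //; lia.
- rewrite (_ : Negz 0 + 1 = Posz 0); last by rewrite NegzE; lia.
  by rewrite /qpoch big_ord0 big_ord1 mulVf //; exact: ha_sub (Negz 0).
rewrite (_ : Negz n.+1 + 1 = Negz n); last by rewrite !NegzE; lia.
have hprod : \prod_(j < n.+1) (1 - a * q ^- j.+1) != 0.
  by apply/prodf_neq0 => j _; exact: ha_sub (Negz j).
rewrite /qpoch (big_ord_recr n.+1) /= invfM mulfVK //; exact: ha_sub (Negz n.+1).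
Qed.

Lemma qpoch_split (k : int) (i : nat) : qpoch a q (k + i%:Z) = qpoch a q k * poch q (a * q ^ k) i.
Proof.
elim: i => [|i IH]; first by rewrite addr0 poch0 mulr1.
rewrite (_ : k + i.+1%:Z = (k + i%:Z) + 1); last by lia.
rewrite qpoch_step IH pochSr -mulrA; congr (_ * (_ * _)).
by rewrite expfzDr // mulrA.
Qed.

End IntegerPochhammer.

Lemma kker_exponent (K : fieldType) (q : K) (y1 y3 : int) (i j : nat) : q != 0 ->
  q ^ ((y1 + i%:Z) * (y1 + i%:Z) - (y1 + i%:Z) * (- y3 + j%:Z) + (- y3 + j%:Z) * (- y3 + j%:Z))
  = q ^ (y1 * y1 + y1 * y3 + y3 * y3) * (q ^ (y1 + y1 + y3)) ^+ i * (q ^ (- y1 - y3 - y3)) ^+ j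
    * q ^+ (i * i) * q ^+ (j * j) / q ^+ (i * j).
Proof.
move=> hq0.
have -> : (y1 + i%:Z) * (y1 + i%:Z) - (y1 + i%:Z) * (- y3 + j%:Z) + (- y3 + j%:Z) * (- y3 + j%:Z)
  = (y1 * y1 + y1 * y3 + y3 * y3) + (y1 + y1 + y3) * i%:Z + (- y1 - y3 - y3) * j%:Z
    + (i * i)%N%:Z + (j * j)%N%:Z - (i * j)%N%:Z by rewrite !PoszM; ring.
by rewrite !expfzDr // -invr_expz -!(exprz_exp q) !expfzDr.
Qed.

Lemma isum_from (K : fieldType) (A : int) (N : nat) (F : int -> K) :
  isum A (A + N%:Z) F = \sum_(i < N.+1) F (A + i%:Z).
Proof.
rewrite /isum ifT; last by lia.
by rewrite (_ : A + N%:Z - A = N%:Z); last by lia.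
Qed.

Section Specialisation.
Variables (K : fieldType) (z w q : K) (y1 y3 : int).
Hypotheses (hq0 : q != 0) (hz0 : z != 0) (hw0 : w != 0) (hq : regular q q).
Hypotheses (hz : forall k : int, z * q ^ k != 1) (hw : forall k : int, w * q ^ k != 1)
  (hzw : forall k : int, z * w * q ^ k != 1).

Definition uz : K := z * q * q ^ (y1 + y1 + y3).
Definition vw : K := w * q * q ^ (- y1 - y3 - y3).
Definition czw : K := z * w * q * q ^ (y1 - y3).

(* The i,j-independent part of Phi, shared by all summands and the right side. *)
Definition prefactor : K :=
  qpoch (z * w * q) q (y1 - y3) / (qpoch (z * q) q (y1 + y1 + y3) * qpoch (z * w * q) q (y1 - y3)
    * qpoch (w * q) q (- y1 - y3 - y3) * qpoch (z * w * q) q (y1 - y3)).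

Lemma uz_vw : uz * vw / q = czw.
Proof.
rewrite /uz /vw /czw (_ : y1 - y3 = (y1 + y1 + y3) + (- y1 - y3 - y3)); last by lia.
rewrite (expfzDr (y1 + y1 + y3) (- y1 - y3 - y3) hq0).
move: (q ^ (y1 + y1 + y3)) (q ^ (- y1 - y3 - y3)) => A B; field; nonzero_side.
Qed.

Lemma regular_uz : regular q uz.
Proof. exact: generic_regular hq0 (generic_mulq hq0 hz) _. Qed.
Lemma regular_vw : regular q vw.
Proof. exact: generic_regular hq0 (generic_mulq hq0 hw) _. Qed.
Lemma regular_czw : regular q czw.
Proof. exact: generic_regular hq0 (generic_mulq hq0 hzw) _. Qed.

Lemma summand_eq (N M i j : nat) : (i <= N)%N -> (j <= M)%N ->
  Kker (y1 + N%:Z) (- y3 + M%:Z) (y1 + i%:Z) (- y3 + j%:Z) z w q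
    * Phi (y1 + i%:Z) (- y3 + j%:Z) y1 (- y1 - y3) y3 z w q
  = z ^ y1 * w ^ (- y3) * q ^ (y1 * y1 + y1 * y3 + y3 * y3) * prefactor
    * double_term q N M uz vw i j.
Proof.
move=> hiN hjM; rewrite /Kker /Phi /double_term uz_vw.
rewrite (_ : y1 + N%:Z - (y1 + i%:Z) = (N - i)%N%:Z); last by lia.
rewrite (_ : - y3 + M%:Z - (- y3 + j%:Z) = (M - j)%N%:Z); last by lia.
rewrite (_ : y1 + i%:Z + (- y3 + j%:Z) = (y1 - y3) + (i + j)%N%:Z); last by lia.
rewrite (_ : y1 + i%:Z - y1 = i%:Z); last by lia.
rewrite (_ : y1 + i%:Z - (- y1 - y3) = (y1 + y1 + y3) + i%:Z); last by lia.
rewrite (_ : y1 + i%:Z - y3 = (y1 - y3) + i%:Z); last by lia.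
rewrite (_ : - y3 + j%:Z + y3 = j%:Z); last by lia.
rewrite (_ : - y3 + j%:Z + (- y1 - y3) = (- y1 - y3 - y3) + j%:Z); last by lia.
rewrite (_ : - y3 + j%:Z + y1 = (y1 - y3) + j%:Z); last by lia.
rewrite kker_exponent // (expfzDr _ _ hz0) (expfzDr _ _ hw0) !qpoch_nat.
have hzw1 := generic_mulq hq0 hzw; have hz1 := generic_mulq hq0 hz.
have hw1 := generic_mulq hq0 hw.
rewrite !qpoch_split // /rqfac hiN hjM /prefactor /uz /vw /czw.
have k1 := qpoch_neq0 hzw1 (y1 - y3); have k2 := qpoch_neq0 hz1 (y1 + y1 + y3).
have k3 := qpoch_neq0 hw1 (- y1 - y3 - y3).
have p1 := generic_regular hq0 hzw1 (y1 - y3); have p2 := generic_regular hq0 hz1 (y1 + y1 + y3).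
have p3 := generic_regular hq0 hw1 (- y1 - y3 - y3).
have P1 := poch_neq0 i p1; have P2 := poch_neq0 j p1; have P3 := poch_neq0 (i + j) p1.
have P4 := poch_neq0 i p2; have P5 := poch_neq0 j p3; have P6 := poch_neq0 i hq.
have P7 := poch_neq0 j hq; have P8 := poch_neq0 (N - i) hq; have P9 := poch_neq0 (M - j) hq.
have e1 : z ^ y1 != 0 by rewrite expfz_eq0 negb_and hz0 orbT.
have e2 : w ^ (- y3) != 0 by rewrite expfz_eq0 negb_and hw0 orbT.
have e3 : q ^ (y1 * y1 + y1 * y3 + y3 * y3) != 0 by rewrite expfz_eq0 negb_and hq0 orbT.
have e4 : q ^+ (i * j) != 0 by rewrite expf_neq0.
move: (poch q (z * w * q * q ^ (y1 - y3))) (poch q (z * q * q ^ (y1 + y1 + y3)) i)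
  (poch q (w * q * q ^ (- y1 - y3 - y3)) j) P1 P2 P3 P4 P5 => F X Y P1 P2 P3 P4 P5.
move: (qpoch (z * w * q) q (y1 - y3)) (qpoch (z * q) q (y1 + y1 + y3))
  (qpoch (w * q) q (- y1 - y3 - y3)) k1 k2 k3 => Q1 Q2 Q3 k1 k2 k3.
move: (z ^ y1) (w ^ (- y3)) (q ^ (y1 * y1 + y1 * y3 + y3 * y3)) e1 e2 e3 => Z W E e1 e2 e3.
move: (q ^ (y1 + y1 + y3)) (q ^ (- y1 - y3 - y3)) => A B.
rewrite (_ : z ^ i%:Z = z ^+ i) // (_ : w ^ j%:Z = w ^+ j) //.
rewrite (_ : z * q * A / q = z * A); last by field.
rewrite (_ : w * q * B / q = w * B); last by field.
rewrite !exprMn; field; nonzero_side.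
Qed.

Lemma phi_shifted (N M : nat) :
  Phi (y1 + N%:Z) (- y3 + M%:Z) y1 (- y1 - y3) y3 z w q
  = prefactor * (poch q czw (N + M) / (poch q q N * poch q q M * poch q uz N
       * poch q vw M * poch q czw N * poch q czw M)).
Proof.
rewrite /Phi.
rewrite (_ : y1 + N%:Z + (- y3 + M%:Z) = (y1 - y3) + (N + M)%N%:Z); last by lia.
rewrite (_ : y1 + N%:Z - y1 = N%:Z); last by lia.
rewrite (_ : y1 + N%:Z - (- y1 - y3) = (y1 + y1 + y3) + N%:Z); last by lia.
rewrite (_ : y1 + N%:Z - y3 = (y1 - y3) + N%:Z); last by lia.
rewrite (_ : - y3 + M%:Z + y3 = M%:Z); last by lia.
rewrite (_ : - y3 + M%:Z + (- y1 - y3) = (- y1 - y3 - y3) + M%:Z); last by lia.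
rewrite (_ : - y3 + M%:Z + y1 = (y1 - y3) + M%:Z); last by lia.
have hzw1 := generic_mulq hq0 hzw; have hz1 := generic_mulq hq0 hz.
have hw1 := generic_mulq hq0 hw.
rewrite !qpoch_nat !qpoch_split // /prefactor /uz /vw /czw.
have k1 := qpoch_neq0 hzw1 (y1 - y3); have k2 := qpoch_neq0 hz1 (y1 + y1 + y3).
have k3 := qpoch_neq0 hw1 (- y1 - y3 - y3).
have p1 := generic_regular hq0 hzw1 (y1 - y3); have p2 := generic_regular hq0 hz1 (y1 + y1 + y3).
have p3 := generic_regular hq0 hw1 (- y1 - y3 - y3).
have P1 := poch_neq0 N p1; have P2 := poch_neq0 M p1; have P3 := poch_neq0 (N + M) p1.
have P4 := poch_neq0 N p2; have P5 := poch_neq0 M p3; have P6 := poch_neq0 N hq.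
have P7 := poch_neq0 M hq.
move: (poch q (z * w * q * q ^ (y1 - y3))) (poch q (z * q * q ^ (y1 + y1 + y3)) N)
  (poch q (w * q * q ^ (- y1 - y3 - y3)) M) P1 P2 P3 P4 P5 => F X Y P1 P2 P3 P4 P5.
move: (qpoch (z * w * q) q (y1 - y3)) (qpoch (z * q) q (y1 + y1 + y3))
  (qpoch (w * q) q (- y1 - y3 - y3)) k1 k2 k3 => Q1 Q2 Q3 k1 k2 k3.
field; nonzero_side.
Qed.

Lemma sum_shifted (N M : nat) :
  isum y1 (y1 + N%:Z) (fun r => isum (- y3) (- y3 + M%:Z) (fun s =>
      Kker (y1 + N%:Z) (- y3 + M%:Z) r s z w q * Phi r s y1 (- y1 - y3) y3 z w q))
  = z ^ y1 * w ^ (- y3) * q ^ (y1 * y1 + y1 * y3 + y3 * y3)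
    * Phi (y1 + N%:Z) (- y3 + M%:Z) y1 (- y1 - y3) y3 z w q.
Proof.
rewrite isum_from; under eq_bigr => i _ do rewrite isum_from.
under eq_bigr => i _ do under eq_bigr => j _ do
  rewrite (summand_eq (ltn_ord i : (i <= N)%N) (ltn_ord j : (j <= M)%N)).
under eq_bigr => i _ do rewrite -mulr_sumr.
have hc : regular q (uz * vw / q) by rewrite uz_vw; exact: regular_czw.
rewrite -mulr_sumr (sum_double_term hq hq0 N M regular_uz regular_vw hc).
by rewrite uz_vw phi_shifted !mulrA.
Qed.

End Specialisation.

(* The cases n < y1 or m + y3 < 0: the outer or every inner sum is empty, and
   Phi vanishes because of a factor 1/(q;q)_k with k < 0. *)
Lemma isum_empty (K : fieldType) (A B : int) (F : int -> K) : B < A -> isum A B F = 0.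
Proof. by rewrite /isum ltNge => /negbTE ->. Qed.

Lemma Phi_vanish (K : fieldType) (z w q : K) (n m y1 y2 y3 : int) : q != 0 ->
  n < y1 \/ m + y3 < 0 -> Phi n m y1 y2 y3 z w q = 0.
Proof.
move=> hq0 [hn | hm]; rewrite /Phi.
- by rewrite (qpoch_qq_neg hq0 (_ : n - y1 < 0)) ?mul0r ?invr0 ?mulr0 //; lia.
- by rewrite (qpoch_qq_neg hq0 hm) !mulr0 !mul0r invr0 mulr0.
Qed.

Theorem corollary4p5 (K : fieldType) (z w q : K) (n m y1 y2 y3 : int)
  (hy : y1 + y2 + y3 = 0)
  (hq0 : q != 0) (hz0 : z != 0) (hw0 : w != 0)
  (hq : forall k : nat, (0 < k)%N -> q ^+ k != 1)
  (hz : forall k : int, z * q ^ k != 1)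
  (hw : forall k : int, w * q ^ k != 1)
  (hzw : forall k : int, z * w * q ^ k != 1) :
  isum y1 n (fun r => isum (y1 + y2) m (fun s =>
      Kker n m r s z w q * Phi r s y1 y2 y3 z w q))
  = z ^ y1 * w ^ (y1 + y2)
    * q ^ ((y1 * y1 + y2 * y2 + y3 * y3) %/ 2)%Z
    * Phi n m y1 y2 y3 z w q.
Proof.
have hqq : regular q q by move=> k; rewrite subr_eq0 eq_sym -exprS hq.
have -> : y2 = - y1 - y3 by lia.
have -> : ((y1 * y1 + (- y1 - y3) * (- y1 - y3) + y3 * y3) %/ 2)%Z
          = y1 * y1 + y1 * y3 + y3 * y3.
  by rewrite (_ : _ + _ = (y1 * y1 + y1 * y3 + y3 * y3) * 2) ?mulzK //; ring.
rewrite (_ : y1 + (- y1 - y3) = - y3); last by lia.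
have [hn | hn] := ltP n y1.
  by rewrite isum_empty // (Phi_vanish z w (- y1 - y3) hq0 (or_introl hn)) mulr0.
have [hm | hm] := ltP (m + y3) 0.
  rewrite (Phi_vanish z w (- y1 - y3) hq0 (or_intror hm)) mulr0.
  rewrite {1}/isum; case: ifP => // _; rewrite big1 // => i _.
  by rewrite isum_empty //; lia.
have [N ->] : exists N : nat, n = y1 + N%:Z by exists (absz (n - y1)); rewrite gez0_abs; lia.
have [M ->] : exists M : nat, m = - y3 + M%:Z by exists (absz (m + y3)); rewrite gez0_abs; lia.
exact: sum_shifted.
Qed.
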